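(* Let $f$ be a positive function with $f(u)\to0$ as $u\to\infty$ which is eventually $C^1$, decreasing, and strictly convex. Suppose that either $f$ is regularly varying of index $-\alpha$ for some $0<\alpha\le 1$ (i.e. $f(\lambda u)/f(u)\to\lambda^{-\alpha}$ as $u\to\infty$ for every $\lambda>0$), or $f$ is slowly varying (i.e. $f(\lambda u)/f(u)\to1$ for every $\lambda>0$) and satisfies $\limsup_{u\to\infty}\frac{|f'((1+\delta)u)|}{|f'(u)|}<1$ for every $\delta>0$. Then for every $\lambda>1$ there exist $\delta>0$ and $x_0\ge1$ such that for all $x\ge x_0$ and all $u$ with $u\ge\lambda u_0(x)$ or $u\le(1/\lambda)u_0(x)$, \[h(u,x)-uf(u)\ge\omega(x)+\delta u_0(x).\]
   Context: $h(u,x)=f(u)\log x+u$, $\omega(x)=\inf_{u\ge0}h(u,x)$, and for $x$ sufficiently large $u_0(x)$ denotes the unique point at which $u\mapsto h(u,x)$ attains its minimum (the unique solution of $f'(u)=-1/\log x$), so $\omega(x)=h(u_0(x),x)$. *)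

From Stdlib Require Export Reals.
From Coquelicot Require Export Coquelicot.
Open Scope R_scope.

Definition h (f : R -> R) (u x : R) : R := f u * ln x + u.

(* omega(x) = inf_{u >= 0} h(u,x)  (greatest lower bound in the extended reals,
   projected to R; for large x it is attained at u_0(x), hence finite). *)
Definition omega (f : R -> R) (x : R) : R :=
  real (Glb_Rbar (fun y => exists u, 0 <= u /\ y = h f u x)).

Definition is_min_h (f : R -> R) (x v : R) : Prop :=
  0 <= v /\ forall u, 0 <= u -> h f v x <= h f u x.

From Stdlib Require Import Reals Lra Psatz Classical.
From Coquelicot Require Import Coquelicot.
Open Scope R_scope.

(* Minimality of u0 = u0(x) gives (f(u0) - f(v)) ln x <= v - u0 for every v >= 0, so the chord slopes
   of f next to u0 are controlled by 1 / ln x. Both growth hypotheses provide b > 1 such that, for large u,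
   the chord slope of f over [b^2 u, b^3 u] is at most a fixed fraction c < 1 of that over [u, b u].
   With l = b^3, comparing h(., x) at u0, b u0, b^2 u0, l u0 (and at u0 / l, b u0 / l, b^2 u0 / l, u0)
   shows that h(l u0, x) and h(u0 / l, x) exceed omega(x) = h(u0, x) by a multiple of u0, and convexity
   of h(., x) spreads this gap to every u outside [u0 / l, l u0]. The correction - u f(u) costs at most
   half of the gap: above l u0 because f(u) -> 0, below u0 / l because h(u0, x) = o(ln x). If u0 stays
   bounded, it tends to its supremum and the gap follows from h(u, x) - u f(u) >= u on [l u0, ln x]. *)

Lemma ln_gt0 x : 1 < x -> 0 < ln x.
Proof. intros Hx. rewrite <- ln_1. apply ln_increasing; lra. Qed.

Lemma eventually_gt M : Rbar_locally p_infty (fun x => M < x).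
Proof. exists M. tauto. Qed.

Lemma eventually_witness (P : R -> Prop) : Rbar_locally p_infty P -> exists x, P x.
Proof. apply filter_ex. Qed.

Lemma eventually_ln_ge K : Rbar_locally p_infty (fun x => K <= ln x).
Proof.
  exists (exp K). intros x Hx. rewrite <- (ln_exp K).
  left. apply ln_increasing; [apply exp_pos | exact Hx].
Qed.

Lemma is_lim_p_infty_lt (g : R -> R) (v k : R) :
  is_lim g p_infty v -> v < k -> Rbar_locally p_infty (fun u => g u < k).
Proof.
  intros Hg Hvk. apply is_lim_spec in Hg.
  apply (filter_imp (fun u => Rabs (g u - v) < k - v)).
  - intros u Hu. apply Rabs_def2 in Hu. lra.
  - exact (Hg (mkposreal _ (proj2 (Rlt_0_minus _ _) Hvk))).
Qed.

Lemma omega_min f x v : is_min_h f x v -> omega f x = h f v x.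
Proof.
  intros [Hv Hmin]. unfold omega.
  rewrite (is_glb_Rbar_unique _ (Finite (h f v x))); [reflexivity|].
  split.
  - intros y [u [Hu ->]]. apply Hmin, Hu.
  - intros y Hy. apply Hy. exists v. split; [exact Hv | reflexivity].
Qed.

Definition convex_above (f : R -> R) (a : R) : Prop :=
  forall p q r, a < p -> p <= q -> q <= r ->
    f q * (r - p) <= (r - q) * f p + (q - p) * f r.

Lemma convex_above_of_strict f a :
  (forall s t th, a < s -> s < t -> 0 < th < 1 ->
     f (th * s + (1 - th) * t) < th * f s + (1 - th) * f t) ->
  convex_above f a.
Proof.
  intros Hc p q r Hp Hpq Hqr.
  destruct (Req_dec p q) as [<-|Hpq']; [nra|].
  destruct (Req_dec q r) as [->|Hqr']; [nra|].
  set (th := (r - q) / (r - p)).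
  assert (Eth : th * (r - p) = r - q) by (unfold th; field; lra).
  assert (Hth : 0 < th < 1) by (split; nra).
  assert (Hq : q = th * p + (1 - th) * r) by (unfold th; field; lra).
  specialize (Hc p r th Hp ltac:(lra) Hth). rewrite <- Hq in Hc.
  replace (q - p) with ((1 - th) * (r - p)) by nra.
  rewrite <- Eth. nra.
Qed.

Lemma convex_above_h f a x :
  0 <= ln x -> convex_above f a -> convex_above (fun u => h f u x) a.
Proof.
  intros HL Hc p q r Hp Hpq Hqr. specialize (Hc p q r Hp Hpq Hqr). unfold h. nra.
Qed.

Lemma derivable_pt_lim_right_quotient f x D dl eps :
  derivable_pt_lim f x D -> 0 < dl -> 0 < eps ->
  exists t, 0 < t < dl /\ Rabs ((f (x + t) - f x) / t - D) < eps.
Proof.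
  intros HD Hdl Heps. destruct (HD eps Heps) as [del Hdel].
  assert (Hm : 0 < Rmin dl del) by (apply Rmin_pos; [lra | apply cond_pos]).
  pose proof (Rmin_l dl del). pose proof (Rmin_r dl del).
  exists (Rmin dl del / 2). split; [lra|].
  apply Hdel; [lra|]. rewrite Rabs_right; lra.
Qed.

Lemma convex_tangent f a x y D :
  convex_above f a -> a < x -> a < y -> is_derive f x D -> f x + D * (y - x) <= f y.
Proof.
  intros Hc Hx Hy HD. apply is_derive_Reals in HD.
  destruct (Rtotal_order x y) as [Hxy|[<-|Hxy]]; [| lra |].
  - apply Rnot_lt_le. intros Hlt.
    set (eps := (f x + D * (y - x) - f y) / (y - x)).
    assert (Eeps : eps * (y - x) = f x + D * (y - x) - f y) by (unfold eps; field; lra).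
    destruct (derivable_pt_lim_right_quotient f x D (y - x) eps HD) as [t [Ht Hq]];
      [lra | unfold eps; apply Rdiv_lt_0_compat; lra |].
    set (q := (f (x + t) - f x) / t) in Hq.
    assert (Eq : f (x + t) = f x + q * t) by (unfold q; field; lra).
    pose proof (Hc x (x + t) y Hx ltac:(lra) ltac:(lra)) as Hch. rewrite Eq in Hch.
    assert (q * (y - x) <= f y - f x) by (apply Rmult_le_reg_l with t; nra).
    apply Rabs_def2 in Hq. nra.
  - apply Rnot_lt_le. intros Hlt.
    set (eps := (f x - f y - D * (x - y)) / (x - y)).
    assert (Eeps : eps * (x - y) = f x - f y - D * (x - y)) by (unfold eps; field; lra).
    destruct (derivable_pt_lim_right_quotient f x D 1 eps HD) as [t [Ht Hq]];
      [lra | unfold eps; apply Rdiv_lt_0_compat; lra |].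
    set (q := (f (x + t) - f x) / t) in Hq.
    assert (Eq : f (x + t) = f x + q * t) by (unfold q; field; lra).
    pose proof (Hc y x (x + t) Hy ltac:(lra) ltac:(lra)) as Hch. rewrite Eq in Hch.
    assert (f x - f y <= q * (x - y)) by (apply Rmult_le_reg_l with t; nra).
    apply Rabs_def2 in Hq. nra.
Qed.

Lemma convex_decreasing_derive_lt0 f a a' x D :
  convex_above f a -> (forall s t, a' < s -> s < t -> f t < f s) ->
  a < x -> a' < x -> is_derive f x D -> D < 0.
Proof.
  intros Hc Hd Hx Hx' HD.
  pose proof (convex_tangent f a x (x + 1) D Hc Hx ltac:(lra) HD).
  pose proof (Hd x (x + 1) Hx' ltac:(lra)). lra.
Qed.

Definition secant_decay (f : R -> R) (b : R) : Prop :=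
  exists c, 0 < c < 1 /\ Rbar_locally p_infty (fun u =>
    f (b ^ 2 * u) - f (b ^ 3 * u) <= c * b ^ 2 * (f u - f (b * u))).

Lemma Rpower_pow_base b y n : 0 < b -> Rpower (b ^ n) y = Rpower b y ^ n.
Proof.
  intros Hb.
  rewrite <- (Rpower_pow n b Hb), <- (Rpower_pow n (Rpower b y)) by apply exp_pos.
  rewrite !Rpower_mult, Rmult_comm. reflexivity.
Qed.

Lemma secant_decay_of_regular_variation f alpha b :
  (forall u, 0 <= u -> 0 < f u) -> 0 < alpha -> 1 < b ->
  (forall l, 0 < l -> is_lim (fun u => f (l * u) / f u) p_infty (Rpower l (- alpha))) ->
  secant_decay f b.
Proof.
  intros Hpos Halpha Hb Hrv.
  set (q := Rpower b (- alpha)).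
  assert (Hq : 0 < q < 1).
  { split; [apply exp_pos|]. rewrite <- (Rpower_O b) by lra. apply Rpower_lt; lra. }
  assert (Hlim : forall n, is_lim (fun u => f (b ^ n * u) / f u) p_infty (q ^ n)).
  { intros n. unfold q. rewrite <- Rpower_pow_base by lra. apply Hrv, pow_lt. lra. }
  assert (Hlim1 : is_lim (fun u => f (b * u) / f u) p_infty q) by (apply Hrv; lra).
  assert (Hq2 : 0 < q ^ 2 < 1 /\ 1 < b ^ 2) by (simpl; repeat split; nra).
  set (c := (1 + q ^ 2 / b ^ 2) / 2).
  assert (Ec : c * b ^ 2 = (b ^ 2 + q ^ 2) / 2) by (unfold c; field; lra).
  assert (Hc : 0 < c < 1).
  { assert (E : q ^ 2 / b ^ 2 * b ^ 2 = q ^ 2) by (field; lra).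
    assert (0 < q ^ 2 / b ^ 2 < 1) by (split; nra).
    unfold c. lra. }
  exists c. split; [exact Hc|].
  set (phi u := f (b ^ 2 * u) / f u - f (b ^ 3 * u) / f u - c * b ^ 2 * (1 - f (b * u) / f u)).
  assert (Hphi : is_lim phi p_infty (q ^ 2 - q ^ 3 - c * b ^ 2 * (1 - q))).
  { apply is_lim_minus'; [apply is_lim_minus'; apply Hlim|].
    apply (is_lim_scal_l _ (c * b ^ 2) p_infty (1 - q)).
    apply is_lim_minus'; [apply is_lim_const | exact Hlim1]. }
  apply (is_lim_p_infty_lt _ _ 0) in Hphi; [| rewrite Ec; simpl in *; nra].
  apply (filter_imp (fun u => phi u < 0 /\ 0 < u)); [| apply filter_and; [exact Hphi | apply eventually_gt]].
  intros u [Hu Hu0]. pose proof (Hpos u ltac:(lra)) as Hfu.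
  assert (E : f (b ^ 2 * u) - f (b ^ 3 * u) - c * b ^ 2 * (f u - f (b * u)) = phi u * f u)
    by (unfold phi; field; lra).
  nra.
Qed.

Lemma secant_decay_of_derive_ratio f a a' a'' b :
  1 < b -> convex_above f a -> (forall s t, a' < s -> s < t -> f t < f s) ->
  (forall u, a'' < u -> ex_derive f u) ->
  (forall d, 0 < d -> exists c, c < 1 /\ exists U, forall u, U <= u ->
     Rabs (Derive f ((1 + d) * u)) / Rabs (Derive f u) <= c) ->
  secant_decay f b.
Proof.
  intros Hb Hc Hdec Hex Hratio.
  destruct (Hratio (b - 1)) as [c [Hc1 [U HU]]]; [lra|].
  set (c' := Rmax c (1 / 2)).
  assert (Hc' : c <= c' /\ 0 < c' < 1).
  { pose proof (Rmax_l c (1 / 2)). pose proof (Rmax_r c (1 / 2)).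
    pose proof (Rmax_lub_lt c (1 / 2) 1 Hc1 ltac:(lra)). unfold c'. lra. }
  exists c'. split; [apply Hc'|].
  apply (filter_imp (fun u => U < u /\ 0 < u /\ a < u /\ a' < u /\ a'' < u)).
  2: { repeat apply filter_and; apply eventually_gt. }
  intros u (HUu & Hu & Hau & Ha'u & Ha''u).
  assert (Hb2 : b < b ^ 2 < b ^ 3).
  { simpl. rewrite !Rmult_1_r. assert (0 < b * b) by nra. split; nra. }
  assert (Hbu : u < b * u /\ b * u < b ^ 2 * u /\ b ^ 2 * u < b ^ 3 * u) by (repeat split; nra).
  set (D1 := Derive f (b * u)). set (D2 := Derive f (b ^ 2 * u)).
  assert (HD1 : is_derive f (b * u) D1) by (apply Derive_correct, Hex; lra).
  assert (HD2 : is_derive f (b ^ 2 * u) D2) by (apply Derive_correct, Hex; lra).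
  pose proof (convex_tangent f a (b ^ 2 * u) (b ^ 3 * u) D2 Hc ltac:(lra) ltac:(lra) HD2) as T2.
  pose proof (convex_tangent f a (b * u) u D1 Hc ltac:(lra) ltac:(lra) HD1) as T1.
  pose proof (convex_decreasing_derive_lt0 f a a' (b * u) D1 Hc Hdec ltac:(lra) ltac:(lra) HD1).
  specialize (HU (b * u) ltac:(lra)).
  replace ((1 + (b - 1)) * (b * u)) with (b ^ 2 * u) in HU by ring. fold D1 D2 in HU.
  rewrite (Rabs_left D1) in HU by lra.
  assert (Hslopes : - D2 <= c' * - D1).
  { pose proof (Rle_abs (- D2)) as HD2abs. rewrite Rabs_Ropp in HD2abs.
    apply Rmult_le_compat_r with (r := - D1) in HU; [|lra].
    unfold Rdiv in HU. rewrite Rmult_assoc, Rinv_l, Rmult_1_r in HU by lra. nra. }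
  set (P := (b - 1) * u).
  assert (HP : 0 < P) by (unfold P; nra).
  replace (b ^ 3 * u - b ^ 2 * u) with (b ^ 2 * P) in T2 by (unfold P; ring).
  replace (u - b * u) with (- P) in T1 by (unfold P; ring).
  apply Rmult_le_compat_r with (r := P) in Hslopes; [|lra].
  assert (S1 : c' * (- D1 * P) <= c' * (f u - f (b * u))) by (apply Rmult_le_compat_l; lra).
  assert (0 < b ^ 2) by lra.
  nra.
Qed.

Definition gap_at_ratio (f u0 : R -> R) (l C x : R) : Prop :=
  h f (u0 x) x + C * u0 x <= h f (l * u0 x) x /\
  h f (u0 x) x + C * u0 x <= h f (u0 x / l) x.

Definition uniform_gap (f u0 : R -> R) (l d x : R) : Prop :=
  forall u, 0 <= u -> (l * u0 x <= u \/ u <= u0 x / l) ->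
    h f (u0 x) x + d * u0 x <= h f u x - u * f u.

Lemma h_gap_above f a x l v C u :
  convex_above f a -> 0 <= ln x -> a < v -> 0 < v -> 1 < l -> 0 < C ->
  l * v <= u -> f u <= C / (2 * l) ->
  h f v x + C * v <= h f (l * v) x ->
  h f v x + C / (2 * l) * v <= h f u x - u * f u.
Proof.
  intros Hc HL Hav Hv Hl HC Hu Hfu Hgap.
  pose proof (convex_above_h f a x HL Hc v (l * v) u Hav ltac:(nra) Hu) as Hch.
  simpl in Hch.
  set (hv := h f v x) in *. set (hu := h f u x) in *. set (hlv := h f (l * v) x) in *.
  assert (Hlv : (hv + C * v) * (u - v) <= hlv * (u - v)) by (apply Rmult_le_compat_r; nra).
  assert (Hslope : C * (u - v) <= (l - 1) * (hu - hv)).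
  { apply Rmult_le_reg_l with v; [exact Hv|]. nra. }
  assert (Hlin : C * u <= l * (hu - hv)) by nra.
  assert (Hfu' : l * (u * f u) <= C / 2 * u).
  { replace (C / 2 * u) with (u * l * (C / (2 * l))) by (field; lra).
    apply Rmult_le_compat_l with (r := u * l) in Hfu; nra. }
  assert (Hvu : C / 2 * v <= C / 2 * u) by (apply Rmult_le_compat_l; nra).
  assert (Hd : (hv + C / (2 * l) * v) * l = l * hv + C / 2 * v) by (field; lra).
  apply Rmult_le_reg_r with l; [lra|]. rewrite Hd. nra.
Qed.

Lemma h_gap_below f a x l v C u :
  convex_above f a -> 0 <= ln x -> a < u -> 0 < v -> 1 < l -> 0 <= C ->
  u <= v / l ->
  h f v x + C * v <= h f (v / l) x ->
  h f v x + C * v <= h f u x.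
Proof.
  intros Hc HL Hau Hv Hl HC Hu Hgap.
  assert (Hvl : v / l < v) by (apply Rmult_lt_reg_r with l; [lra|]; field_simplify; nra).
  pose proof (convex_above_h f a x HL Hc u (v / l) v Hau Hu ltac:(lra)) as Hch.
  simpl in Hch.
  set (hv := h f v x) in *. set (hu := h f u x) in *. set (hvl := h f (v / l) x) in *.
  assert ((hv + C * v) * (v - u) <= hvl * (v - u)) by (apply Rmult_le_compat_r; lra).
  assert (C * v * (v - v / l) <= C * v * (v - u)) by (apply Rmult_le_compat_l; nra).
  apply Rmult_le_reg_l with (v - v / l); [lra|]. nra.
Qed.

Lemma h_sub_ge_of_h_ge f x u v G C :
  0 < ln x -> 0 <= u <= v -> 0 <= G -> 0 < C ->
  G + C * v <= C / 2 * ln x -> G + C * v <= h f u x ->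
  G + C / 2 * v <= h f u x - u * f u.
Proof.
  intros HL Hu HG HC Hsmall Hh.
  assert (E : ln x * (h f u x - u * f u) = (ln x - u) * h f u x + u * u) by (unfold h; ring).
  apply Rmult_le_reg_l with (ln x); [exact HL|]. rewrite E.
  assert (Hvl : v <= ln x) by nra.
  assert ((ln x - v) * (G + C * v) <= (ln x - u) * (G + C * v)) by (apply Rmult_le_compat_r; nra).
  assert ((ln x - u) * (G + C * v) <= (ln x - u) * h f u x) by (apply Rmult_le_compat_l; lra).
  assert (v * (G + C * v) <= v * (C / 2 * ln x)) by (apply Rmult_le_compat_l; lra).
  nra.
Qed.

Lemma minimizer_gap_above f x b c u :
  0 < ln x -> 1 < b -> 0 < c -> 0 < u -> is_min_h f x u ->
  f (b ^ 2 * u) - f (b ^ 3 * u) <= c * b ^ 2 * (f u - f (b * u)) ->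
  h f u x + (1 - c) * b ^ 2 * ((b - 1) * u) <= h f (b ^ 3 * u) x.
Proof.
  intros HL Hb Hc Hu [_ Hmin] Hdecay.
  assert (Hb2 : 1 < b ^ 2) by (apply Rlt_pow_R1; auto).
  pose proof (Hmin (b * u) ltac:(nra)) as Hbu. pose proof (Hmin (b ^ 2 * u) ltac:(nra)) as Hb2u.
  unfold h in *.
  assert (S1 : (f u - f (b * u)) * ln x <= (b - 1) * u) by lra.
  assert (S2 : (f (b ^ 2 * u) - f (b ^ 3 * u)) * ln x <= c * b ^ 2 * ((b - 1) * u)).
  { apply Rle_trans with (c * b ^ 2 * ((f u - f (b * u)) * ln x)).
    - replace (c * b ^ 2 * ((f u - f (b * u)) * ln x))
        with (c * b ^ 2 * (f u - f (b * u)) * ln x) by ring.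
      apply Rmult_le_compat_r; lra.
    - apply Rmult_le_compat_l; [nra | exact S1]. }
  replace (b ^ 3 * u) with (b ^ 2 * u + b ^ 2 * ((b - 1) * u)) at 2 by ring.
  nra.
Qed.

Lemma minimizer_gap_below f x b c w :
  0 < ln x -> 1 < b -> 0 < c < 1 -> 0 < w -> is_min_h f x (b ^ 3 * w) ->
  f (b ^ 2 * w) - f (b ^ 3 * w) <= c * b ^ 2 * (f w - f (b * w)) ->
  h f (b ^ 3 * w) x + (1 - c) * ((b - 1) * w) <= h f w x.
Proof.
  intros HL Hb Hc Hw [_ Hmin] Hdecay.
  assert (Hb2 : 1 < b ^ 2) by (apply Rlt_pow_R1; auto).
  pose proof (Hmin (b * w) ltac:(nra)) as Hbw. pose proof (Hmin (b ^ 2 * w) ltac:(nra)) as Hb2w.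
  unfold h in *.
  assert (S1 : b ^ 2 * ((b - 1) * w) <= (f (b ^ 2 * w) - f (b ^ 3 * w)) * ln x).
  { replace (b ^ 3 * w) with (b ^ 2 * w + b ^ 2 * ((b - 1) * w)) in Hb2w at 2 by ring. lra. }
  assert (S2 : (b - 1) * w <= c * ((f w - f (b * w)) * ln x)).
  { apply Rmult_le_reg_l with (b ^ 2); [lra|].
    apply Rle_trans with (1 := S1).
    replace (b ^ 2 * (c * ((f w - f (b * w)) * ln x)))
      with (c * b ^ 2 * (f w - f (b * w)) * ln x) by ring.
    apply Rmult_le_compat_r; lra. }
  (* 1 / c >= 2 - c *)
  assert (S3 : (2 - c) * ((b - 1) * w) <= (f w - f (b * w)) * ln x).
  { assert (0 <= (f w - f (b * w)) * ln x) by nra.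
    assert ((2 - c) * c <= 1) by nra. nra. }
  nra.
Qed.

Section Minimizer.

Variables (f u0 : R -> R) (X : R).
Hypothesis X_gt1 : 1 < X.
Hypothesis f_pos : forall u, 0 <= u -> 0 < f u.
Hypothesis f_lim0 : is_lim f p_infty 0.
Hypothesis u0_min : forall x, X <= x -> is_min_h f x (u0 x).

Lemma u0_ge0 x : X <= x -> 0 <= u0 x.
Proof. intros Hx. apply (u0_min x Hx). Qed.

Lemma u0_le_hmin x : X <= x -> u0 x <= h f (u0 x) x.
Proof.
  intros Hx. pose proof (u0_ge0 x Hx). pose proof (f_pos _ H).
  pose proof (ln_gt0 x ltac:(lra)). unfold h. nra.
Qed.

Lemma u0_nondecreasing x x' : X <= x -> x <= x' -> u0 x <= u0 x'.
Proof.
  intros Hx Hxx'.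
  destruct (u0_min x Hx) as [H0 Hmin]. destruct (u0_min x' ltac:(lra)) as [H0' Hmin'].
  specialize (Hmin _ H0'). specialize (Hmin' _ H0). unfold h in Hmin, Hmin'.
  destruct (Req_dec x x') as [<-|Hne]; [lra|].
  assert (ln x < ln x') by (apply ln_increasing; lra).
  pose proof (ln_gt0 x ltac:(lra)).
  (* adding the two minimality inequalities gives (f(u0 x) - f(u0 x')) (ln x' - ln x) <= 0 *)
  assert (f (u0 x') <= f (u0 x)) by nra.
  nra.
Qed.

Lemma f_ge_on_initial_segment A :
  (exists x, X <= x /\ A < u0 x) -> exists c, 0 < c /\ forall u, 0 <= u <= A -> c <= f u.
Proof.
  intros [x [Hx HA]]. pose proof (ln_gt0 x ltac:(lra)) as HL.
  exists ((u0 x - A) / ln x). split; [apply Rdiv_lt_0_compat; lra|].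
  intros u Hu. destruct (u0_min x Hx) as [_ Hmin]. specialize (Hmin u (proj1 Hu)).
  pose proof (f_pos _ (u0_ge0 x Hx)). unfold h in Hmin.
  apply Rmult_le_reg_r with (ln x); [exact HL|].
  unfold Rdiv. rewrite Rmult_assoc, Rinv_l, Rmult_1_r by lra. nra.
Qed.

Lemma hmin_le_eps_ln eps :
  0 < eps -> Rbar_locally p_infty (fun x => h f (u0 x) x <= eps * ln x).
Proof.
  intros Heps.
  destruct (is_lim_p_infty_lt f 0 (eps / 2) f_lim0 ltac:(lra)) as [M HM].
  set (v := Rabs M + 1).
  assert (Hv : M < v /\ 0 <= v) by (pose proof (Rle_abs M); pose proof (Rabs_pos M); unfold v; lra).
  apply (filter_imp (fun x => X <= x /\ 2 * v / eps <= ln x)).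
  - intros x [Hx HL]. destruct (u0_min x Hx) as [_ Hmin].
    specialize (Hmin v (proj2 Hv)). specialize (HM v (proj1 Hv)). unfold h in *.
    assert (2 * v <= eps * ln x).
    { apply Rmult_le_compat_l with (r := eps) in HL; [|lra].
      replace (eps * (2 * v / eps)) with (2 * v) in HL by (field; lra). exact HL. }
    pose proof (ln_gt0 x ltac:(lra)). nra.
  - apply filter_and; [apply filter_imp with (2 := eventually_gt X); intros; lra | apply eventually_ln_ge].
Qed.

Lemma hmin_gap_le C k :
  0 <= C -> 0 < k ->
  Rbar_locally p_infty (fun x => h f (u0 x) x + C * u0 x <= k * ln x).
Proof.
  intros HC Hk.
  apply (filter_imp (fun x => X <= x /\ h f (u0 x) x <= k / (1 + C) * ln x)).
  - intros x [Hx Hle]. pose proof (u0_le_hmin x Hx). pose proof (u0_ge0 x Hx).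
    apply Rmult_le_compat_l with (r := 1 + C) in Hle; [|lra].
    replace ((1 + C) * (k / (1 + C) * ln x)) with (k * ln x) in Hle by (field; lra). nra.
  - apply filter_and; [apply filter_imp with (2 := eventually_gt X); intros; lra|].
    apply hmin_le_eps_ln, Rdiv_lt_0_compat; lra.
Qed.

Lemma f_u0_le eps : 0 < eps -> Rbar_locally p_infty (fun x => f (u0 x) <= eps).
Proof.
  intros Heps.
  apply (filter_imp (fun x => X <= x /\ h f (u0 x) x <= eps * ln x)).
  - intros x [Hx Hle]. pose proof (u0_ge0 x Hx). pose proof (ln_gt0 x ltac:(lra)).
    unfold h in Hle. nra.
  - apply filter_and; [apply filter_imp with (2 := eventually_gt X); intros; lra|].
    apply hmin_le_eps_ln, Heps.
Qed.

Lemma u0_tends_to_infty :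
  ~ (exists M, forall x, X <= x -> u0 x <= M) ->
  forall M, Rbar_locally p_infty (fun x => M <= u0 x).
Proof.
  intros Hunb M.
  destruct (not_all_ex_not _ _ (not_ex_all_not _ _ Hunb M)) as [x1 Hx1].
  apply imply_to_and in Hx1. destruct Hx1 as [Hx1 HM].
  exists x1. intros x Hx. pose proof (u0_nondecreasing x1 x Hx1 ltac:(lra)). lra.
Qed.

Lemma gap_at_ratio_of_secant_decay b :
  1 < b -> secant_decay f b -> (forall M, Rbar_locally p_infty (fun x => M <= u0 x)) ->
  exists C, 0 < C /\ Rbar_locally p_infty (gap_at_ratio f u0 (b ^ 3) C).
Proof.
  intros Hb [c [Hc [U HU]]] Hinf.
  assert (Hb3 : 1 <= b ^ 2 /\ 1 < b ^ 3) by (split; [left|]; apply Rlt_pow_R1; auto).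
  exists ((1 - c) * (b - 1) / b ^ 3). split; [apply Rdiv_lt_0_compat; nra|].
  apply (filter_imp (fun x => X < x /\ b ^ 3 * (Rabs U + 1) <= u0 x)).
  2: { apply filter_and; [apply eventually_gt | apply Hinf]. }
  intros x [Hx Hux]. pose proof (Rle_abs U). pose proof (Rabs_pos U).
  pose proof (ln_gt0 x ltac:(lra)) as HL.
  set (w := u0 x / b ^ 3).
  assert (Hw : u0 x = b ^ 3 * w) by (unfold w; field; lra).
  assert (HwU : U < w /\ 0 < w) by (split; apply Rmult_lt_reg_l with (b ^ 3); nra).
  assert (Hwu : w <= u0 x) by nra.
  unfold gap_at_ratio.
  replace ((1 - c) * (b - 1) / b ^ 3 * u0 x) with ((1 - c) * ((b - 1) * w)) by (rewrite Hw; field; lra).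
  split.
  - apply Rle_trans with (h f (u0 x) x + (1 - c) * b ^ 2 * ((b - 1) * u0 x)).
    + assert ((b - 1) * w <= (b - 1) * u0 x) by (apply Rmult_le_compat_l; lra).
      assert ((b - 1) * u0 x <= b ^ 2 * ((b - 1) * u0 x)).
      { rewrite <- (Rmult_1_l ((b - 1) * u0 x)) at 1.
        apply Rmult_le_compat_r; [apply Rmult_le_pos|]; lra. }
      rewrite Rmult_assoc. apply Rplus_le_compat_l, Rmult_le_compat_l; lra.
    + apply minimizer_gap_above; try lra; [apply u0_min; lra | apply HU; lra].
  - change (u0 x / b ^ 3) with w. rewrite Hw at 1.
    apply minimizer_gap_below; try lra; [rewrite <- Hw; apply u0_min; lra | apply HU; lra].
Qed.

Lemma f_le_beyond_u0 k :
  0 < k -> (forall M, Rbar_locally p_infty (fun x => M <= u0 x)) ->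
  Rbar_locally p_infty (fun x => forall u, u0 x <= u -> f u <= k).
Proof.
  intros Hk Hinf. destruct (is_lim_p_infty_lt f 0 k f_lim0 Hk) as [M HM].
  apply (filter_imp (fun x => M + 1 <= u0 x)); [|apply Hinf].
  intros x Hx u Hu. left. apply HM. lra.
Qed.

Lemma uniform_gap_unbounded a l C :
  1 < l -> 0 < C -> convex_above f a ->
  (forall M, Rbar_locally p_infty (fun x => M <= u0 x)) ->
  Rbar_locally p_infty (gap_at_ratio f u0 l C) ->
  Rbar_locally p_infty (uniform_gap f u0 l (C / (2 * l))).
Proof.
  intros Hl HC Hc Hinf Hgap.
  destruct (f_ge_on_initial_segment a) as [c1 [Hc1 Hfa]].
  { destruct (eventually_witness _ (filter_and _ _ (eventually_gt X) (Hinf (a + 1)))) as [x [Hx Hax]].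
    exists x. split; lra. }
  apply (filter_imp (fun x => (X < x /\ l * (Rabs a + 1) <= u0 x) /\
    (gap_at_ratio f u0 l C x /\ (forall u, u0 x <= u -> f u <= C / (2 * l))) /\
    h f (u0 x) x + C * u0 x <= Rmin c1 (C / 2) * ln x)).
  2: { apply filter_and; [apply filter_and; [apply eventually_gt | apply Hinf] |].
       apply filter_and; [apply filter_and; [exact Hgap |] |].
       - apply f_le_beyond_u0; [apply Rdiv_lt_0_compat; lra | exact Hinf].
       - apply hmin_gap_le; [lra | apply Rmin_pos; lra]. }
  intros x [[Hx Hux] [[[Hup Hlow] Hfsmall] Hsmall]] u Hu Hcase.
  pose proof (ln_gt0 x ltac:(lra)) as HL.
  pose proof (Rle_abs a). pose proof (Rabs_pos a).
  pose proof (Rmin_l c1 (C / 2)). pose proof (Rmin_r c1 (C / 2)).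
  assert (Ediv : u0 x / l * l = u0 x) by (field; lra).
  assert (Hal : a < u0 x / l /\ 0 < u0 x / l) by (split; nra).
  assert (Hu0l : u0 x / l <= u0 x) by nra.
  destruct Hcase as [Habove|Hbelow].
  - apply (h_gap_above f a); try (exact Hc || exact Hup || lra). apply Hfsmall. nra.
  - assert (Hh : h f (u0 x) x + C * u0 x <= h f u x).
    { destruct (Rle_lt_dec u a) as [Hua|Hua].
      - pose proof (Hfa u (conj Hu Hua)). unfold h at 2. nra.
      - apply (h_gap_below f a x l); try (exact Hc || exact Hlow || lra). }
    apply Rle_trans with (h f (u0 x) x + C / 2 * u0 x).
    + assert (C / (2 * l) <= C / 2).
      { apply Rmult_le_compat_l; [lra|]. apply Rinv_le_contravar; lra. }
      pose proof (u0_ge0 x ltac:(lra)). nra.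
    + pose proof (u0_le_hmin x ltac:(lra)). pose proof (u0_ge0 x ltac:(lra)).
      apply h_sub_ge_of_h_ge; try lra. nra.
Qed.

Lemma h_sub_ge_ln :
  Rbar_locally p_infty (fun x => forall u, ln x <= u -> ln x <= h f u x - u * f u).
Proof.
  destruct (is_lim_p_infty_lt f 0 (1 / 2) f_lim0 ltac:(lra)) as [M HM].
  apply (filter_imp (fun x => Rabs M + 1 <= ln x)); [|apply eventually_ln_ge].
  intros x Hx u Hu. pose proof (Rle_abs M).
  specialize (HM u ltac:(lra)). unfold h. nra.
Qed.

Lemma u0_sup_of_bounded :
  (exists M, forall x, X <= x -> u0 x <= M) ->
  exists us, (forall x, X <= x -> u0 x <= us) /\
    forall eta, 0 < eta -> Rbar_locally p_infty (fun x => us - eta < u0 x).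
Proof.
  intros [M HM].
  destruct (completeness (fun y => exists x, X <= x /\ y = u0 x)) as [us [Hub Hlub]].
  { exists M. intros y [x [Hx ->]]. auto. }
  { exists (u0 X), X. split; [lra | reflexivity]. }
  exists us. split; [intros x Hx; apply Hub; exists x; auto|].
  intros eta Heta.
  destruct (classic (exists x, X <= x /\ us - eta < u0 x)) as [[x1 [Hx1 H1]]|Hn].
  - exists x1. intros x Hx. pose proof (u0_nondecreasing x1 x Hx1 ltac:(lra)). lra.
  - exfalso. assert (us <= us - eta); [|lra].
    apply Hlub. intros y [x [Hx ->]].
    apply Rnot_lt_le. intros Hlt. apply Hn. exists x. auto.
Qed.

Lemma u0_sup_pos us : (forall x, X <= x -> u0 x <= us) -> 0 < us.
Proof.
  intros Hus. apply Rnot_le_lt. intros Hle.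
  pose proof (f_pos 0 (Rle_refl 0)) as Hf0.
  destruct (eventually_witness _ (filter_and _ _ (eventually_gt X) (f_u0_le (f 0 / 2) ltac:(lra))))
    as [x [Hx Hf]].
  assert (Hz : u0 x = 0) by (pose proof (Hus x ltac:(lra)); pose proof (u0_ge0 x ltac:(lra)); lra).
  rewrite Hz in Hf. lra.
Qed.

Lemma hmin_le_u0_sup us :
  (forall x, X <= x -> u0 x <= us) -> forall x, X <= x -> h f (u0 x) x <= us.
Proof.
  intros Hus x Hx. pose proof (ln_gt0 x ltac:(lra)) as HL.
  apply Rle_plus_epsilon. intros eps Heps.
  assert (Heps' : 0 < eps / ln x) by (apply Rdiv_lt_0_compat; lra).
  destruct (eventually_witness _ (filter_and _ _ (eventually_gt x) (f_u0_le _ Heps'))) as [x' [Hx' Hf]].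
  destruct (u0_min x Hx) as [_ Hmin]. specialize (Hmin (u0 x') (u0_ge0 x' ltac:(lra))).
  specialize (Hus x' ltac:(lra)).
  apply Rmult_le_compat_r with (r := ln x) in Hf; [|lra].
  replace (eps / ln x * ln x) with eps in Hf by (field; lra).
  unfold h in *. lra.
Qed.

Lemma uniform_gap_bounded l :
  1 < l -> (exists M, forall x, X <= x -> u0 x <= M) ->
  Rbar_locally p_infty (uniform_gap f u0 l ((l - 1) / 2)).
Proof.
  intros Hl Hbd.
  destruct (u0_sup_of_bounded Hbd) as [us [Hus Hlim]].
  pose proof (u0_sup_pos us Hus) as Hus0.
  assert (Husl : us / l * l = us) by (field; lra).
  destruct (f_ge_on_initial_segment (us / l)) as [c1 [Hc1 Hfl]].
  { destruct (eventually_witness _ (filter_and _ _ (eventually_gt X)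
      (Hlim ((us - us / l) / 2) ltac:(nra)))) as [x [Hx H]].
    exists x. split; [lra | nra]. }
  set (k := Rmin c1 (Rmin ((l - 1) / 2) 1)).
  assert (Hk : 0 < k /\ k <= c1 /\ k <= (l - 1) / 2 /\ k <= 1).
  { unfold k. repeat split; repeat apply Rmin_pos; try lra; eauto using Rle_trans, Rmin_l, Rmin_r. }
  assert (Hnear : 0 < us * (l - 1) / (l + 1)) by (apply Rdiv_lt_0_compat; nra).
  apply (filter_imp (fun x => (X < x /\ us - us * (l - 1) / (l + 1) < u0 x) /\
     (forall u, ln x <= u -> ln x <= h f u x - u * f u) /\
     h f (u0 x) x + (l - 1) * u0 x <= k * ln x)).
  2: { apply filter_and; [apply filter_and; [apply eventually_gt | apply Hlim, Hnear] |].
       apply filter_and; [apply h_sub_ge_ln | apply hmin_gap_le; lra]. }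
  intros x [[Hx Hu0x] [Hbig Hsmall]] u Hu Hcase.
  pose proof (ln_gt0 x ltac:(lra)) as HL. pose proof (Hus x ltac:(lra)).
  pose proof (u0_ge0 x ltac:(lra)). pose proof (u0_le_hmin x ltac:(lra)).
  pose proof (hmin_le_u0_sup us Hus x ltac:(lra)).
  assert (Ediv : u0 x / l * l = u0 x) by (field; lra).
  destruct Hcase as [Habove|Hbelow].
  - destruct (Rle_lt_dec (ln x) u) as [HLu|HLu].
    + specialize (Hbig u HLu). nra.
    + assert (us <= (l + 1) / 2 * u0 x).
      { replace (us - us * (l - 1) / (l + 1)) with (2 / (l + 1) * us) in Hu0x by (field; lra).
        replace us with ((l + 1) / 2 * (2 / (l + 1) * us)) at 1 by (field; lra).
        apply Rmult_le_compat_l; lra. }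
      assert (0 <= f u * (ln x - u)) by (apply Rmult_le_pos; [apply Rlt_le, f_pos |]; lra).
      unfold h at 2. nra.
  - assert (Hul : u <= us / l) by nra.
    pose proof (Hfl u (conj Hu Hul)).
    apply h_sub_ge_of_h_ge; try lra; [nra | nra | unfold h at 2; nra].
Qed.

End Minimizer.

Lemma cube_root_gt1 l : 1 < l -> 1 < Rpower l (/ 3) /\ Rpower l (/ 3) ^ 3 = l.
Proof.
  intros Hl. split.
  - rewrite <- (Rpower_O l) at 1 by lra. apply Rpower_lt; lra.
  - rewrite <- Rpower_pow by apply exp_pos. rewrite Rpower_mult.
    replace (/ 3 * INR 3) with 1 by (simpl; field). apply Rpower_1. lra.
Qed.

Theorem lemma2p1 (f u0 : R -> R)
  (Hpos : forall u, 0 <= u -> 0 < f u)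
  (Hlim : is_lim f p_infty (Finite 0))
  (HC1 : exists a, forall u, a < u -> ex_derive f u /\ continuous (Derive f) u)
  (Hdec : exists a, forall s t, a < s -> s < t -> f t < f s)
  (Hconv : exists a, forall s t th, a < s -> s < t -> 0 < th < 1 ->
             f (th * s + (1 - th) * t) < th * f s + (1 - th) * f t)
  (Hvar :
     (exists alpha, 0 < alpha <= 1 /\
        forall l, 0 < l ->
          is_lim (fun u => f (l * u) / f u) p_infty (Finite (Rpower l (- alpha))))
     \/
     ((forall l, 0 < l -> is_lim (fun u => f (l * u) / f u) p_infty (Finite 1)) /\
      (* limsup_{u->oo} |f'((1+d)u)| / |f'(u)| < 1, written out *)
      forall d, 0 < d -> exists c, c < 1 /\ exists U, forall u, U <= u ->
          Rabs (Derive f ((1 + d) * u)) / Rabs (Derive f u) <= c))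
  (* standing convention: for x large, u0 x is the unique minimiser of h(.,x) on [0,oo) *)
  (Hu0 : exists X, forall x, X <= x ->
           is_min_h f x (u0 x) /\ (forall v, is_min_h f x v -> v = u0 x)) :
  forall l, 1 < l ->
    exists d, 0 < d /\ exists x0, 1 <= x0 /\
      forall x u, x0 <= x -> 0 <= u ->
        (l * u0 x <= u \/ u <= u0 x / l) ->
        h f u x - u * f u >= omega f x + d * u0 x.
Proof.
  intros l Hl.
  destruct Hu0 as [X0 HX0]. set (X := Rmax X0 2).
  assert (HX : X0 <= X /\ 1 < X) by (unfold X; pose proof (Rmax_l X0 2); pose proof (Rmax_r X0 2); lra).
  assert (Hmin : forall x, X <= x -> is_min_h f x (u0 x)) by (intros x Hx; apply HX0; lra).
  destruct Hconv as [a Hconv]. apply convex_above_of_strict in Hconv.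
  assert (Hgap : exists d, 0 < d /\ Rbar_locally p_infty (uniform_gap f u0 l d)).
  { destruct (classic (exists M, forall x, X <= x -> u0 x <= M)) as [Hbd|Hunb].
    - exists ((l - 1) / 2). split; [lra|].
      exact (uniform_gap_bounded f u0 X (proj2 HX) Hpos Hlim Hmin l Hl Hbd).
    - pose proof (u0_tends_to_infty f u0 X (proj2 HX) Hmin Hunb) as Hinf.
      destruct (cube_root_gt1 l Hl) as [Hb Hb3].
      assert (Hdecay : secant_decay f (Rpower l (/ 3))).
      { destruct Hvar as [[alpha [[Halpha _] Hrv]] | [_ Hratio]].
        - exact (secant_decay_of_regular_variation f alpha _ Hpos Halpha Hb Hrv).
        - destruct HC1 as [a1 Ha1], Hdec as [a2 Ha2].
          apply (secant_decay_of_derive_ratio f a a2 a1); auto. apply Ha1. }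
      destruct (gap_at_ratio_of_secant_decay f u0 X (proj2 HX) Hmin _ Hb Hdecay Hinf)
        as [C [HC Hev]].
      rewrite Hb3 in Hev.
      exists (C / (2 * l)). split; [apply Rdiv_lt_0_compat; lra|].
      exact (uniform_gap_unbounded f u0 X (proj2 HX) Hpos Hlim Hmin a l C Hl HC Hconv Hinf Hev). }
  destruct Hgap as [d [Hd [M HM]]].
  exists d. split; [exact Hd|]. exists (Rmax (M + 1) X).
  pose proof (Rmax_l (M + 1) X). pose proof (Rmax_r (M + 1) X).
  split; [lra|]. intros x u Hx Hu Hcase.
  rewrite (omega_min f x (u0 x)) by (apply Hmin; lra).
  apply Rle_ge, HM; [lra | exact Hu | exact Hcase].
Qed.
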